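(* Let $c>0$, $d\ge 2$, $m\ge 0$ with $m+\frac d2>1$. Let $\phi_k$ be a real solution, bounded on $[-1,1]$, of $$\big((1-\eta)(1+\eta)^{m+\frac d2}\phi_k'(\eta)\big)'+\Big(\alpha_k-\frac{c^2(1+\eta)}{8}\Big)(1+\eta)^{m+\frac d2-1}\phi_k(\eta)=0,\qquad \eta\in(-1,1),$$ normalized by $\int_{-1}^1(1+t)^{m+\frac d2-1}|\phi_k(t)|^2dt=2^{m+\frac d2-1}$. If $\alpha_k>\frac{c^2}{4}$, then $$\sup_{\eta\in[a_{m,d},1]}\sqrt{(1-\eta)(1+\eta)^{m+\frac d2}}\,|\phi_k(\eta)|\le\sqrt{2^{m+\frac d2+1}\big(m+\tfrac d2-1\big)},\qquad a_{m,d}=\frac{2m+d-2}{2m+d}.$$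
   Context: This is the radial equation of ball prolate spheroidal wave functions $\psi(x)=r^m\phi_k(2r^2-1)Y(\hat x)$, where $\alpha_k=\frac14(\chi^{(m)}_k(c)-m(m+d))$ and $\chi^{(m)}_k(c)$ is the corresponding eigenvalue of $\mathcal{L}_c=-\nabla\cdot(1-\|x\|^2)\nabla-\Delta_0+c^2\|x\|^2$. *)

From Stdlib Require Import Reals Lra.
From Coquelicot Require Import Coquelicot.
Open Scope R_scope.

(* Real power x^y for x >= 0: equals Rpower x y for x > 0 and 0 for x <= 0
   (the natural value 0^y = 0 for y > 0). *)
Definition rpow (x y : R) : R := if Rle_dec x 0 then 0 else Rpower x y.

Definition beta (m d : nat) : R := INR m + INR d / 2.

Definition a_md (m d : nat) : R := (2 * INR m + INR d - 2) / (2 * INR m + INR d).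

From Stdlib Require Import Reals Lra Psatz Classical.
From Coquelicot Require Import Coquelicot.
Open Scope R_scope.

(** With b = m + d/2, weight w(t) = (1+t)^(b-1), stiffness p(t) = (1-t)(1+t)^b
    and potential q(t) = alpha - c^2(1+t)/8 > 0, the equation reads
    (p phi')' + q w phi = 0, and we must bound P = p(eta) phi(eta)^2 by
    4 (b-1) N, where N = w(1) = 2^(b-1) is the normalised weighted mass.

    The proof compares two energies, H = p phi^2 + (p phi')^2/(q w) and
    K = w H, with the weighted mass W(t) = int_{-1}^t w phi^2 in [0, N].
    - Boundary behaviour: boundedness of phi forces the flux Y = p phi' to be
      small along points near 1 and Y^2/w to be small along points near -1
      (otherwise |phi'| >= const/(1 -+ t) and phi blows up logarithmically);
      hence H vanishes near -1 and K (and H) vanish near 1.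
    - Monotonicity: H + 2W increases where the affine "drift" is <= 0,
      H - 2bW decreases where it is >= 0, and K + 2NW always increases.
      Comparing with the endpoint values gives H(eta) <= 2N, resp.
      H(eta) <= 2b W(eta) and K(eta) <= 2N (N - W(eta)).
    - Since w(1) <= 7/4 w(eta) on [(b-1)/b, 1] and b >= 3/2, eliminating
      W(eta) yields P <= 4 (b-1) N, which is the theorem after taking roots. *)

Lemma Derive_eq (f : R -> R) (x l : R) : is_derive f x l -> Derive (fun y : R => f y) x = l.
Proof. apply is_derive_unique. Qed.

Lemma continuity_pt_of_is_derive (f : R -> R) (x l : R) :
  is_derive f x l -> continuity_pt f x.
Proof.
  intros Hf. apply continuity_pt_filterlim.
  apply (@ex_derive_continuous R_AbsRing R_NormedModule). now exists l.
Qed.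

Lemma nondecreasing_of_derive (f df : R -> R) (x y : R) :
  (forall t, x <= t <= y -> is_derive f t (df t)) ->
  (forall t, x <= t <= y -> 0 <= df t) -> x <= y -> f x <= f y.
Proof.
  intros Hd Hpos Hxy.
  destruct (MVT_gen f x y df) as [z [Hz Hmvt]];
    rewrite ?Rmin_left, ?Rmax_right in * by lra.
  - intros t Ht. apply Hd. lra.
  - intros t Ht. apply (continuity_pt_of_is_derive f t (df t)), Hd. lra.
  - assert (0 <= df z * (y - x)) by (apply Rmult_le_pos; [apply Hpos|]; lra). lra.
Qed.

Lemma nonincreasing_of_derive (f df : R -> R) (x y : R) :
  (forall t, x <= t <= y -> is_derive f t (df t)) ->
  (forall t, x <= t <= y -> df t <= 0) -> x <= y -> f y <= f x.
Proof.
  intros Hd Hneg Hxy.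
  enough (- f x <= - f y) by lra.
  apply (nondecreasing_of_derive (fun t => - f t) (fun t => - df t)); auto.
  - intros t Ht. apply (is_derive_opp f t (df t)), Hd. lra.
  - intros t Ht. specialize (Hneg t Ht). lra.
Qed.

Lemma positive_of_nonvanishing (g : R -> R) (x y : R) :
  (forall t, x <= t <= y -> continuity_pt g t /\ g t <> 0) ->
  x <= y -> 0 < g x -> 0 < g y.
Proof.
  intros Hg Hxy Hx.
  destruct (Rlt_le_dec 0 (g y)) as [|Hy]; [assumption|exfalso].
  destruct (Req_dec x y) as [<-|Hne]; [lra|].
  assert (Hy0 : g y <> 0) by (apply Hg; lra).
  destruct (Ranalysis5.IVT_interv (fun t => - g t) x y) as [z [Hz Hz0]]; [| lra | lra | lra |].
  - intros t Ht. apply continuity_pt_opp, Hg. lra.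
  - apply (proj2 (Hg z Hz)). lra.
Qed.

(** Logarithmic blow-up: a slope of at least k/(1-t) drives f to +oo at 1,
    since f + k ln(1-t) is nondecreasing while k ln(1-t) tends to -oo. *)
Lemma log_blowup (f g : R -> R) (s k M : R) : s < 1 -> 0 < k ->
  (forall t, s < t < 1 -> is_derive f t (g t) /\ k / (1 - t) <= g t) ->
  exists t, s < t < 1 /\ M < f t.
Proof.
  intros Hs Hk Hd.
  set (s' := (s + 1) / 2).
  set (L := (Rabs (f s') + Rabs M + 1) / k).
  assert (HL : 0 < L) by (unfold L; pose proof (Rabs_pos (f s')); pose proof (Rabs_pos M);
    apply Rdiv_lt_0_compat; lra).
  set (t := 1 - (1 - s') * exp (- L)).
  assert (Hexp : 0 < exp (- L) < 1)
    by (split; [apply exp_pos|rewrite <- exp_0; apply exp_increasing; lra]).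
  assert (Ht : s' < t < 1) by (unfold t, s' in *; split; nra).
  exists t. split; [unfold s' in Ht; lra|].
  assert (Hmono : f s' + k * ln (1 - s') <= f t + k * ln (1 - t)).
  { apply (nondecreasing_of_derive (fun x => f x + k * ln (1 - x))
             (fun x => g x - k / (1 - x))); [| |lra].
    - intros x Hx. destruct (Hd x ltac:(unfold s' in *; lra)) as [Hfx _].
      auto_derive; [repeat split; [eexists; eauto|lra]|].
      rewrite (Derive_eq f x _ Hfx). field. lra.
    - intros x Hx. destruct (Hd x ltac:(unfold s' in *; lra)) as [_ Hg]. lra. }
  assert (Hln : ln (1 - t) = ln (1 - s') - L).
  { unfold t. replace (1 - (1 - (1 - s') * exp (- L))) with ((1 - s') * exp (- L)) by ring.
    rewrite ln_mult, ln_exp by (unfold s'; lra). ring. }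
  assert (k * L = Rabs (f s') + Rabs M + 1) by (unfold L; field; lra).
  pose proof (Rle_abs M). pose proof (Rle_abs (- f s')). rewrite Rabs_Ropp in *. nra.
Qed.

(** A continuous slope with |f'| >= k/(1-t) that is positive at s stays
    positive (it has no zeros), so f blows up to +oo near 1. *)
Lemma steep_positive_unbounded (f g : R -> R) (s k M : R) : s < 1 -> 0 < k -> 0 < g s ->
  (forall t, s <= t < 1 ->
     is_derive f t (g t) /\ continuity_pt g t /\ k / (1 - t) <= Rabs (g t)) ->
  exists t, s < t < 1 /\ M < f t.
Proof.
  intros Hs Hk Hgs Hd.
  apply (log_blowup f g s k M Hs Hk). intros t Ht.
  destruct (Hd t ltac:(lra)) as (Hf & _ & Hsteep). split; [exact Hf|].
  assert (Hgt : 0 < g t).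
  { apply (positive_of_nonvanishing g s t); [|lra|exact Hgs].
    intros x Hx. destruct (Hd x ltac:(lra)) as (_ & Hc & Hsteepx).
    split; [exact Hc|]. intros Hzero. rewrite Hzero, Rabs_R0 in Hsteepx.
    assert (0 < k / (1 - x)) by (apply Rdiv_lt_0_compat; lra). lra. }
  rewrite Rabs_pos_eq in Hsteep by lra. exact Hsteep.
Qed.

Lemma steep_unbounded_right (f g : R -> R) (s k M : R) : s < 1 -> 0 < k ->
  (forall t, s <= t < 1 ->
     is_derive f t (g t) /\ continuity_pt g t /\ k / (1 - t) <= Rabs (g t)) ->
  exists t, s < t < 1 /\ M < Rabs (f t).
Proof.
  intros Hs Hk Hd.
  assert (Hgs : g s <> 0).
  { intros Hzero. destruct (Hd s ltac:(lra)) as (_ & _ & Hsteep).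
    rewrite Hzero, Rabs_R0 in Hsteep. assert (0 < k / (1 - s)) by (apply Rdiv_lt_0_compat; lra).
    lra. }
  destruct (Rlt_le_dec 0 (g s)) as [Hpos|Hneg].
  - destruct (steep_positive_unbounded f g s k M Hs Hk Hpos Hd) as [t [Ht HM]].
    exists t. split; [exact Ht|]. pose proof (Rle_abs (f t)). lra.
  - destruct (steep_positive_unbounded (fun t => - f t) (fun t => - g t) s k M Hs Hk)
      as [t [Ht HM]]; [lra| |].
    + intros t Ht. destruct (Hd t Ht) as (Hf & Hc & Hsteep).
      split; [apply (is_derive_opp f t (g t)), Hf|].
      split; [now apply continuity_pt_opp|]. now rewrite Rabs_Ropp.
    + exists t. split; [exact Ht|]. pose proof (Rle_abs (- f t)). rewrite Rabs_Ropp in *. lra.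
Qed.

Lemma steep_unbounded_left (f g : R -> R) (s k M : R) : -1 < s -> 0 < k ->
  (forall t, -1 < t <= s ->
     is_derive f t (g t) /\ continuity_pt g t /\ k / (1 + t) <= Rabs (g t)) ->
  exists t, -1 < t < s /\ M < Rabs (f t).
Proof.
  intros Hs Hk Hd.
  destruct (steep_unbounded_right (fun t => f (- t)) (fun t => - g (- t)) (- s) k M)
    as [t [Ht HM]]; [lra|exact Hk| |].
  - intros t Ht. destruct (Hd (- t) ltac:(lra)) as (Hf & Hc & Hsteep).
    split; [|split].
    + replace (- g (- t)) with (scal (-1) (g (- t)))
        by (unfold scal; simpl; unfold mult; simpl; ring).
      apply (is_derive_comp f Ropp t (g (- t)) (-1)); [exact Hf|].
      apply (is_derive_opp (fun x => x) t 1), (is_derive_id (K := R_AbsRing)).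
    + apply continuity_pt_opp, (continuity_pt_comp Ropp g).
      * apply continuity_pt_opp, continuity_pt_id.
      * exact Hc.
    + rewrite Rabs_Ropp. replace (1 - t) with (1 + - t) by ring. exact Hsteep.
  - exists (- t). split; [lra|exact HM].
Qed.

Lemma div_le_div (a a' d d' : R) :
  0 <= a -> a <= a' -> 0 < d' -> d' <= d -> a / d <= a' / d'.
Proof.
  intros. unfold Rdiv. apply Rmult_le_compat; try lra.
  - left. apply Rinv_0_lt_compat. lra.
  - apply Rinv_le_contravar; lra.
Qed.

Lemma small_parameter (A eps : R) : 0 <= A -> 0 < eps ->
  exists dl, 0 < dl <= 1 /\ dl * A <= eps.
Proof.
  intros HA He. exists (Rmin 1 (eps / (A + 1))).
  assert (Hq : 0 < eps / (A + 1)) by (apply Rdiv_lt_0_compat; lra).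
  pose proof (Rmin_l 1 (eps / (A + 1))). pose proof (Rmin_r 1 (eps / (A + 1))).
  split; [split; [apply Rmin_pos|]; lra|].
  apply Rle_trans with (eps / (A + 1) * (A + 1)); [|right; field; lra].
  assert (0 < Rmin 1 (eps / (A + 1))) by (apply Rmin_pos; lra).
  apply Rmult_le_compat; lra.
Qed.

Definition near_one (P : R -> Prop) : Prop :=
  forall s, s < 1 -> exists t, s < t < 1 /\ P t.

Definition near_minus_one (P : R -> Prop) : Prop :=
  forall s, -1 < s -> exists t, -1 < t < s /\ P t.

Lemma near_one_mono (P Q : R -> Prop) :
  (forall t, -1 < t < 1 -> P t -> Q t) -> near_one P -> near_one Q.
Proof.
  intros HPQ HP s Hs.
  destruct (HP (Rmax s (-1))) as [t [Ht HPt]]; [apply Rmax_lub_lt; lra|].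
  pose proof (Rmax_l s (-1)). pose proof (Rmax_r s (-1)).
  exists t. split; [lra|]. apply HPQ; [lra|exact HPt].
Qed.

Lemma near_minus_one_mono (P Q : R -> Prop) :
  (forall t, -1 < t < 1 -> P t -> Q t) -> near_minus_one P -> near_minus_one Q.
Proof.
  intros HPQ HP s Hs.
  destruct (HP (Rmin s 1)) as [t [Ht HPt]]; [apply Rmin_glb_lt; lra|].
  pose proof (Rmin_l s 1). pose proof (Rmin_r s 1).
  exists t. split; [lra|]. apply HPQ; [lra|exact HPt].
Qed.

Lemma le_of_monotone_near_one (G : R -> R) (x L : R) : x < 1 ->
  (forall t, x < t < 1 -> G x <= G t) ->
  (forall eps, 0 < eps -> near_one (fun t => G t <= L + eps)) -> G x <= L.
Proof.
  intros Hx Hmono Hnear. apply Rle_plus_epsilon. intros eps He.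
  destruct (Hnear eps He x Hx) as [t [Ht HG]]. specialize (Hmono t Ht). lra.
Qed.

Lemma le_of_monotone_near_minus_one (G : R -> R) (x L : R) : -1 < x ->
  (forall t, -1 < t < x -> G x <= G t) ->
  (forall eps, 0 < eps -> near_minus_one (fun t => G t <= L + eps)) -> G x <= L.
Proof.
  intros Hx Hmono Hnear. apply Rle_plus_epsilon. intros eps He.
  destruct (Hnear eps He x Hx) as [t [Ht HG]]. specialize (Hmono t Ht). lra.
Qed.

(** The data of the radial equation written in self-adjoint form
    (p phi')' + q w phi = 0 with b = m + d/2:
    weight w(t) = (1+t)^(b-1), stiffness p(t) = (1-t)(1+t)^b = (1-t)(1+t) w(t),
    potential q(t) = alpha - c^2 (1+t)/8. *)
Definition weight (b t : R) : R := Rpower (1 + t) (b - 1).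

Definition stiffness (b t : R) : R := (1 - t) * (1 + t) * weight b t.

Definition potential (c alpha t : R) : R := alpha - c ^ 2 * (1 + t) / 8.

(** [drift] governs the sign of the derivative of the energy [energy_H] below;
    it is affine and nonincreasing in t. *)
Definition drift (b c alpha t : R) : R :=
  (b - 1) * potential c alpha t - c ^ 2 * (1 + t) / 8.

Definition solves_ode (b c alpha : R) (phi Y : R -> R) : Prop :=
  forall t, -1 < t < 1 ->
    is_derive phi t (Y t / stiffness b t) /\
    is_derive Y t (- (potential c alpha t * weight b t * phi t)).

(** Two Sonine-type energies; note [energy_K] = w [energy_H]. *)
Definition energy_H (b c alpha : R) (phi Y : R -> R) (t : R) : R :=
  stiffness b t * phi t ^ 2 + Y t ^ 2 / (potential c alpha t * weight b t).

Definition energy_K (b c alpha : R) (phi Y : R -> R) (t : R) : R :=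
  weight b t * energy_H b c alpha phi Y t.

Definition energy_H_rate (b c alpha : R) (phi Y : R -> R) (t : R) : R :=
  weight b t * ((b - 1) - (b + 1) * t) * phi t ^ 2
  - Y t ^ 2 / ((1 + t) * potential c alpha t ^ 2 * weight b t) * drift b c alpha t.

Definition energy_K_rate (b c alpha : R) (phi Y : R -> R) (t : R) : R :=
  2 * weight b t ^ 2 * ((b - 1) - b * t) * phi t ^ 2
  + c ^ 2 / 8 * (Y t / potential c alpha t) ^ 2.

Definition mass (b : R) (phi : R -> R) (t : R) : R :=
  RInt (fun s => weight b s * phi s ^ 2) (-1) t.

Lemma weight_pos (b t : R) : -1 < t -> 0 < weight b t.
Proof. intros. unfold weight, Rpower. apply exp_pos. Qed.

Lemma weight_derive (b t : R) : -1 < t ->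
  is_derive (weight b) t ((b - 1) * weight b t / (1 + t)).
Proof.
  intros Ht. unfold weight.
  assert (Hpow : is_derive (fun s => Rpower s (b - 1)) (1 + t)
                   ((b - 1) * Rpower (1 + t) (b - 1 - 1))).
  { apply is_derive_Reals, derivable_pt_lim_power. lra. }
  assert (Hshift : is_derive (fun s => 1 + s) t 1).
  { auto_derive; auto. }
  replace ((b - 1) * Rpower (1 + t) (b - 1) / (1 + t))
    with (scal 1 ((b - 1) * Rpower (1 + t) (b - 1 - 1))).
  - exact (is_derive_comp _ _ t _ _ Hpow Hshift).
  - unfold scal; simpl; unfold mult; simpl.
    replace (Rpower (1 + t) (b - 1)) with (Rpower (1 + t) (b - 1 - 1 + 1)) by (f_equal; ring).
    rewrite Rpower_plus, Rpower_1 by lra. field. lra.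
Qed.

Lemma weight_le (b s t : R) : 1 <= b -> -1 < s <= t -> weight b s <= weight b t.
Proof. intros. unfold weight. apply Rle_Rpower_l; lra. Qed.

Lemma weight_zero (b : R) : weight b 0 = 1.
Proof. unfold weight, Rpower. rewrite Rplus_0_r, ln_1, Rmult_0_r. apply exp_0. Qed.

Lemma stiffness_pos (b t : R) : -1 < t < 1 -> 0 < stiffness b t.
Proof.
  intros Ht. pose proof (weight_pos b t (proj1 Ht)).
  unfold stiffness. apply Rmult_lt_0_compat; [apply Rmult_lt_0_compat|]; lra.
Qed.

Lemma stiffness_continuous (b t : R) : -1 < t -> continuity_pt (stiffness b) t.
Proof.
  intros Ht. apply (continuity_pt_of_is_derive _ _ (Derive (stiffness b) t)), Derive_correct.
  pose proof (weight_derive b t Ht) as Hw. unfold stiffness. auto_derive. eexists; exact Hw.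
Qed.

Lemma stiffness_le (b t : R) : 1 <= b -> -1 < t < 1 ->
  stiffness b t <= 2 * weight b 1 * (1 + t) /\ stiffness b t <= 2 * weight b 1 * (1 - t).
Proof.
  intros Hb Ht. pose proof (weight_pos b t (proj1 Ht)).
  pose proof (weight_le b t 1 Hb ltac:(lra)). unfold stiffness.
  set (w := weight b t) in *. set (w1 := weight b 1) in *.
  assert (0 <= (1 - t) * (w1 - w)) by (apply Rmult_le_pos; lra).
  assert (0 <= (1 + t) * (w1 - w)) by (apply Rmult_le_pos; lra).
  assert (0 <= (1 - t) * (1 - t) * w) by (apply Rmult_le_pos; nra).
  assert (0 <= (1 + t) * (1 + t) * w) by (apply Rmult_le_pos; nra).
  split; nra.
Qed.

Section RadialEquation.

Variables (b c alpha M : R) (phi Y : R -> R).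
Hypothesis Hq : 0 < potential c alpha 1.
Hypothesis Hode : solves_ode b c alpha phi Y.
Hypothesis Hbd : forall t, -1 <= t <= 1 -> Rabs (phi t) <= M.

Lemma potential_ge (t : R) : t <= 1 -> potential c alpha 1 <= potential c alpha t.
Proof. intros. unfold potential. pose proof (pow2_ge_0 c). nra. Qed.

Lemma potential_pos (t : R) : t <= 1 -> 0 < potential c alpha t.
Proof. intros Ht. pose proof (potential_ge t Ht). lra. Qed.

Lemma phi_sq_le (t : R) : -1 <= t <= 1 -> phi t ^ 2 <= M ^ 2.
Proof.
  intros Ht. pose proof (Hbd t Ht). pose proof (Rabs_pos (phi t)).
  rewrite <- (pow2_abs (phi t)). nra.
Qed.

Lemma energy_H_derive (t : R) : -1 < t < 1 ->
  is_derive (energy_H b c alpha phi Y) t (energy_H_rate b c alpha phi Y t).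
Proof.
  intros Ht. destruct (Hode t Ht) as [Hphi HY].
  pose proof (weight_derive b t (proj1 Ht)) as Hw.
  pose proof (weight_pos b t (proj1 Ht)).
  pose proof (potential_pos t ltac:(lra)).
  unfold energy_H, energy_H_rate, stiffness, potential in *. auto_derive.
  - repeat split; try (eexists; eassumption). apply Rgt_not_eq, Rmult_lt_0_compat; lra.
  - rewrite (Derive_eq phi t _ Hphi), (Derive_eq Y t _ HY), (Derive_eq (weight b) t _ Hw).
    unfold drift, potential. field. repeat split; lra.
Qed.

Lemma energy_K_derive (t : R) : -1 < t < 1 ->
  is_derive (energy_K b c alpha phi Y) t (energy_K_rate b c alpha phi Y t).
Proof.
  intros Ht. destruct (Hode t Ht) as [Hphi HY].
  pose proof (weight_derive b t (proj1 Ht)) as Hw.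
  pose proof (weight_pos b t (proj1 Ht)).
  pose proof (potential_pos t ltac:(lra)).
  unfold energy_K, energy_K_rate, energy_H, stiffness, potential in *. auto_derive.
  - repeat split; try (eexists; eassumption). apply Rgt_not_eq, Rmult_lt_0_compat; lra.
  - rewrite (Derive_eq phi t _ Hphi), (Derive_eq Y t _ HY), (Derive_eq (weight b) t _ Hw).
    field. repeat split; lra.
Qed.

End RadialEquation.

(** Near -1, a flux with Y^2 >= eps w forces a slope
    |Y/p| >= (sqrt eps / 2)/(1+t), because p^2 = (1-t)^2 (1+t)^2 w^2
    and (1-t)^2 w <= 4 on (-1, 0]. *)
Lemma slope_ge_left (b eps t y : R) : 1 <= b -> 0 < eps -> -1 < t <= 0 ->
  eps * weight b t <= y ^ 2 -> sqrt eps / 2 / (1 + t) <= Rabs (y / stiffness b t).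
Proof.
  intros Hb He Ht Hy.
  pose proof (stiffness_pos b t ltac:(lra)) as Hp.
  pose proof (weight_pos b t ltac:(lra)) as Hw.
  pose proof (weight_le b t 0 Hb ltac:(lra)) as Hw0. rewrite weight_zero in Hw0.
  assert (Hk : 0 <= sqrt eps / 2 / (1 + t))
    by (apply Rdiv_le_0_compat; [apply Rdiv_le_0_compat; [apply sqrt_pos|]|]; lra).
  rewrite <- (Rabs_pos_eq (sqrt eps / 2 / (1 + t))) by exact Hk.
  apply Rsqr_le_abs_0. unfold Rsqr.
  replace (sqrt eps / 2 / (1 + t) * (sqrt eps / 2 / (1 + t)))
    with (eps / (4 * (1 + t) ^ 2))
    by (replace eps with (sqrt eps * sqrt eps) at 1 by (apply sqrt_sqrt; lra); field; lra).
  replace (y / stiffness b t * (y / stiffness b t)) with (y ^ 2 / stiffness b t ^ 2)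
    by (field; lra).
  apply Rle_trans with (eps * weight b t / stiffness b t ^ 2).
  - replace (eps * weight b t / stiffness b t ^ 2)
      with (eps / ((1 - t) ^ 2 * weight b t * (1 + t) ^ 2))
      by (unfold stiffness; field; lra).
    apply div_le_div; [lra|lra| |].
    + apply Rmult_lt_0_compat; [apply Rmult_lt_0_compat|]; try apply pow_lt; lra.
    + apply Rmult_le_compat_r; [apply pow_le; lra|].
      assert ((1 - t) ^ 2 <= 4) by nra.
      assert (0 <= (1 - t) ^ 2) by apply pow2_ge_0. nra.
  - apply div_le_div; [apply Rmult_le_pos; lra|exact Hy|apply pow_lt; lra|lra].
Qed.

Section Boundary.

Variables (b c alpha M : R) (phi Y : R -> R).
Hypothesis Hb : 1 <= b.
Hypothesis Hode : solves_ode b c alpha phi Y.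
Hypothesis Hbd : forall t, -1 <= t <= 1 -> Rabs (phi t) <= M.

Lemma slope_continuous (t : R) : -1 < t < 1 ->
  continuity_pt (fun x => Y x / stiffness b x) t.
Proof.
  intros Ht. apply continuity_pt_div.
  - exact (continuity_pt_of_is_derive _ _ _ (proj2 (Hode t Ht))).
  - apply stiffness_continuous. lra.
  - apply Rgt_not_eq, stiffness_pos, Ht.
Qed.

Lemma abs_slope (t : R) : -1 < t < 1 ->
  Rabs (Y t / stiffness b t) = Rabs (Y t) / stiffness b t.
Proof.
  intros Ht. pose proof (stiffness_pos b t Ht).
  unfold Rdiv. rewrite Rabs_mult, Rabs_inv, (Rabs_pos_eq (stiffness b t)); lra.
Qed.

(** Since phi is bounded, the flux Y = p phi' cannot stay away from 0 near 1:
    otherwise |phi'| >= const/(1-t) would make phi unbounded. *)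
Lemma flux_vanishes_near_one (eps : R) : 0 < eps -> near_one (fun t => Rabs (Y t) < eps).
Proof.
  intros He s Hs. apply NNPP. intros Hno.
  set (s' := (Rmax s 0 + 1) / 2).
  assert (Hs' : s < s' < 1 /\ 0 < s').
  { pose proof (Rmax_l s 0). pose proof (Rmax_r s 0).
    assert (Rmax s 0 < 1) by (apply Rmax_lub_lt; lra). unfold s'. lra. }
  assert (Hlarge : forall t, s' <= t < 1 -> eps <= Rabs (Y t)).
  { intros t Ht. apply Rnot_lt_le. intros Hlt. apply Hno. exists t. split; [lra|exact Hlt]. }
  pose proof (weight_pos b 1 ltac:(lra)) as Hw1.
  destruct (steep_unbounded_right phi (fun x => Y x / stiffness b x) s' (eps / (2 * weight b 1)) M)
    as [t [Ht HM]]; [lra|apply Rdiv_lt_0_compat; lra| |].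
  - intros t Ht. split; [exact (proj1 (Hode t ltac:(lra)))|].
    split; [apply slope_continuous; lra|].
    rewrite abs_slope by lra.
    replace (eps / (2 * weight b 1) / (1 - t)) with (eps / (2 * weight b 1 * (1 - t)))
      by (field; lra).
    apply div_le_div; [lra|apply Hlarge; lra|apply stiffness_pos; lra|].
    apply (stiffness_le b t Hb). lra.
  - specialize (Hbd t ltac:(lra)). lra.
Qed.

(** Near -1 the flux is small relative to the weight: otherwise
    |phi'| >= const/(1+t) and phi would again be unbounded. *)
Lemma flux_small_near_minus_one (eps : R) : 0 < eps ->
  near_minus_one (fun t => Y t ^ 2 < eps * weight b t).
Proof.
  intros He s Hs. apply NNPP. intros Hno.
  set (s' := (-1 + Rmin s 0) / 2).
  assert (Hs' : -1 < s' < s /\ s' < 0).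
  { pose proof (Rmin_l s 0). pose proof (Rmin_r s 0).
    assert (-1 < Rmin s 0) by (apply Rmin_glb_lt; lra). unfold s'. lra. }
  assert (Hlarge : forall t, -1 < t <= s' -> eps * weight b t <= Y t ^ 2).
  { intros t Ht. apply Rnot_lt_le. intros Hlt. apply Hno. exists t. split; [lra|exact Hlt]. }
  destruct (steep_unbounded_left phi (fun x => Y x / stiffness b x) s' (sqrt eps / 2) M)
    as [t [Ht HM]]; [lra|apply Rdiv_lt_0_compat; [apply sqrt_lt_R0|]; lra| |].
  - intros t Ht. split; [exact (proj1 (Hode t ltac:(lra)))|].
    split; [apply slope_continuous; lra|].
    apply slope_ge_left; [exact Hb|exact He|lra|apply Hlarge; lra].
  - specialize (Hbd t ltac:(lra)). lra.
Qed.

End Boundary.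

Section Energies.

Variables (b c alpha M : R) (phi Y : R -> R).
Hypothesis Hb : 1 <= b.
Hypothesis Hq : 0 < potential c alpha 1.
Hypothesis Hode : solves_ode b c alpha phi Y.
Hypothesis Hbd : forall t, -1 <= t <= 1 -> Rabs (phi t) <= M.

Notation H := (energy_H b c alpha phi Y).
Notation K := (energy_K b c alpha phi Y).

Lemma energy_H_ge (t : R) : -1 < t < 1 -> stiffness b t * phi t ^ 2 <= H t.
Proof.
  intros Ht. pose proof (weight_pos b t (proj1 Ht)). pose proof (potential_pos c alpha Hq t ltac:(lra)).
  unfold energy_H. assert (0 <= Y t ^ 2 / (potential c alpha t * weight b t)); [|lra].
  apply Rdiv_le_0_compat; [apply pow2_ge_0|apply Rmult_lt_0_compat; lra].
Qed.

Lemma energy_H_nonneg (t : R) : -1 < t < 1 -> 0 <= H t.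
Proof.
  intros Ht. eapply Rle_trans; [|apply energy_H_ge, Ht].
  apply Rmult_le_pos; [left; apply stiffness_pos, Ht|apply pow2_ge_0].
Qed.

(** Pointwise bounds: the first terms vanish at the respective endpoint. *)
Lemma energy_H_le (t : R) : -1 < t < 1 ->
  H t <= 2 * weight b 1 * M ^ 2 * (1 + t)
         + Y t ^ 2 / (potential c alpha 1 * weight b t).
Proof.
  intros Ht. pose proof (weight_pos b t (proj1 Ht)).
  pose proof (potential_ge c alpha t ltac:(lra)).
  unfold energy_H. apply Rplus_le_compat.
  - apply Rle_trans with (2 * weight b 1 * (1 + t) * M ^ 2); [|right; ring].
    apply Rmult_le_compat; [left; apply stiffness_pos, Ht|apply pow2_ge_0| |].
    + apply (stiffness_le b t Hb Ht).
    + apply (phi_sq_le M phi Hbd). lra.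
  - apply div_le_div; [apply pow2_ge_0|lra|apply Rmult_lt_0_compat; lra|].
    apply Rmult_le_compat_r; lra.
Qed.

Lemma energy_K_le (t : R) : -1 < t < 1 ->
  K t <= 2 * weight b 1 ^ 2 * M ^ 2 * (1 - t) + Y t ^ 2 / potential c alpha 1.
Proof.
  intros Ht. pose proof (weight_pos b t (proj1 Ht)) as Hw.
  pose proof (weight_le b t 1 Hb ltac:(lra)) as Hw1.
  pose proof (potential_ge c alpha t ltac:(lra)).
  pose proof (stiffness_pos b t Ht). pose proof (proj2 (stiffness_le b t Hb Ht)).
  pose proof (phi_sq_le M phi Hbd t ltac:(lra)). pose proof (pow2_ge_0 (phi t)).
  unfold energy_K, energy_H. rewrite Rmult_plus_distr_l. apply Rplus_le_compat.
  - apply Rle_trans with (weight b 1 * (2 * weight b 1 * (1 - t)) * M ^ 2); [|right; ring].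
    rewrite <- Rmult_assoc.
    apply Rmult_le_compat; [apply Rmult_le_pos; lra|lra| |lra].
    apply Rmult_le_compat; lra.
  - replace (weight b t * (Y t ^ 2 / (potential c alpha t * weight b t)))
      with (Y t ^ 2 / potential c alpha t) by (field; lra).
    apply div_le_div; [apply pow2_ge_0|lra|exact Hq|lra].
Qed.

Lemma energy_H_vanishes_near_minus_one (eps : R) : 0 < eps ->
  near_minus_one (fun t => H t <= eps).
Proof.
  intros He s Hs.
  pose proof (weight_pos b 1 ltac:(lra)).
  destruct (small_parameter (2 * weight b 1 * M ^ 2) (eps / 2)) as [dl [Hdl Hsmall]];
    [apply Rmult_le_pos; [lra|apply pow2_ge_0]|lra|].
  assert (Hs' : -1 < Rmin s (-1 + dl)) by (apply Rmin_glb_lt; lra).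
  destruct (flux_small_near_minus_one b c alpha M phi Y Hb Hode Hbd (eps * potential c alpha 1 / 2)
              ltac:(apply Rdiv_lt_0_compat; [apply Rmult_lt_0_compat|]; lra) _ Hs')
    as [t [Ht HY]].
  pose proof (Rmin_l s (-1 + dl)). pose proof (Rmin_r s (-1 + dl)).
  exists t. split; [lra|].
  pose proof (weight_pos b t ltac:(lra)).
  eapply Rle_trans; [apply energy_H_le; lra|].
  assert (2 * weight b 1 * M ^ 2 * (1 + t) <= eps / 2).
  { eapply Rle_trans; [|exact Hsmall]. rewrite Rmult_comm.
    apply Rmult_le_compat_r; [apply Rmult_le_pos; [lra|apply pow2_ge_0]|lra]. }
  assert (Y t ^ 2 / (potential c alpha 1 * weight b t) <= eps / 2).
  { apply Rle_trans with (eps * potential c alpha 1 / 2 * weight b t / (potential c alpha 1 * weight b t)).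
    - apply div_le_div; [apply pow2_ge_0|lra|apply Rmult_lt_0_compat; lra|lra].
    - right. field. lra. }
  lra.
Qed.

Lemma energy_K_vanishes_near_one (eps : R) : 0 < eps -> near_one (fun t => K t <= eps).
Proof.
  intros He s Hs.
  assert (HA : 0 <= 2 * weight b 1 ^ 2 * M ^ 2 + / potential c alpha 1).
  { pose proof (Rinv_0_lt_compat _ Hq). pose proof (pow2_ge_0 (weight b 1)).
    pose proof (pow2_ge_0 M). assert (0 <= weight b 1 ^ 2 * M ^ 2) by (apply Rmult_le_pos; lra).
    lra. }
  destruct (small_parameter _ eps HA He) as [dl [Hdl Hsmall]].
  assert (Hs' : Rmax (Rmax s (-1)) (1 - dl) < 1)
    by (apply Rmax_lub_lt; [apply Rmax_lub_lt|]; lra).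
  destruct (flux_vanishes_near_one b c alpha M phi Y Hb Hode Hbd dl (proj1 Hdl) _ Hs')
    as [t [Ht HY]].
  pose proof (Rmax_l (Rmax s (-1)) (1 - dl)). pose proof (Rmax_r (Rmax s (-1)) (1 - dl)).
  pose proof (Rmax_l s (-1)). pose proof (Rmax_r s (-1)).
  exists t. split; [lra|].
  eapply Rle_trans; [apply energy_K_le; lra|].
  assert (HY2 : Y t ^ 2 <= dl).
  { rewrite <- pow2_abs. pose proof (Rabs_pos (Y t)). nra. }
  eapply Rle_trans; [|exact Hsmall]. rewrite Rmult_plus_distr_l.
  apply Rplus_le_compat.
  - rewrite (Rmult_comm dl). apply Rmult_le_compat_l; [|lra].
    apply Rmult_le_pos; [apply Rmult_le_pos; [lra|apply pow2_ge_0]|apply pow2_ge_0].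
  - unfold Rdiv. apply Rmult_le_compat_r; [|exact HY2].
    left. apply Rinv_0_lt_compat, Hq.
Qed.

(** Since K = w H with w >= 1 on [0, 1), [H] also vanishes along points near 1. *)
Lemma energy_H_vanishes_near_one (eps : R) : 0 < eps -> near_one (fun t => H t <= eps).
Proof.
  intros He s Hs.
  destruct (energy_K_vanishes_near_one eps He (Rmax s 0)) as [t [Ht HK]];
    [apply Rmax_lub_lt; lra|].
  pose proof (Rmax_l s 0). pose proof (Rmax_r s 0).
  exists t. split; [lra|].
  pose proof (weight_le b 0 t Hb ltac:(lra)) as Hw. rewrite weight_zero in Hw.
  pose proof (energy_H_nonneg t ltac:(lra)).
  unfold energy_K in HK. nra.
Qed.

End Energies.

Lemma drift_antitone (b c alpha s t : R) : 0 <= b -> s <= t ->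
  drift b c alpha t <= drift b c alpha s.
Proof.
  intros Hb Hst. unfold drift, potential.
  assert (0 <= b * c ^ 2 * (t - s)) by (apply Rmult_le_pos; [apply Rmult_le_pos|]; nra).
  lra.
Qed.

Section Mass.

Variables (b : R) (phi : R -> R).
Hypothesis Hmass : is_RInt (fun s => weight b s * phi s ^ 2) (-1) 1 (weight b 1).
Hypothesis Hdiff : forall t, -1 < t < 1 -> ex_derive phi t.

Lemma mass_integrable (t : R) : -1 <= t <= 1 ->
  ex_RInt (fun s => weight b s * phi s ^ 2) (-1) t /\
  ex_RInt (fun s => weight b s * phi s ^ 2) t 1.
Proof.
  intros Ht. assert (Hex : ex_RInt (fun s => weight b s * phi s ^ 2) (-1) 1) by now exists (weight b 1).
  split.
  - apply (@ex_RInt_Chasles_1 R_CompleteNormedModule _ _ _ 1); [lra|exact Hex].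
  - apply (@ex_RInt_Chasles_2 R_CompleteNormedModule _ (-1)); [lra|exact Hex].
Qed.

Lemma mass_derive (t : R) : -1 < t < 1 -> is_derive (mass b phi) t (weight b t * phi t ^ 2).
Proof.
  intros Ht. apply (is_derive_RInt (fun s => weight b s * phi s ^ 2) (mass b phi) (-1)).
  - apply (locally_interval _ t (-1) 1); simpl; try lra.
    intros y Hy1 Hy2. apply (@RInt_correct R_CompleteNormedModule), mass_integrable. lra.
  - apply (@ex_derive_continuous R_AbsRing R_NormedModule).
    pose proof (weight_derive b t (proj1 Ht)). pose proof (Hdiff t Ht).
    auto_derive. split; [eexists; eassumption|]. split; [assumption|exact I].
Qed.

Lemma mass_bounds (t : R) : -1 <= t <= 1 -> 0 <= mass b phi t <= weight b 1.
Proof.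
  intros Ht. destruct (mass_integrable t Ht) as [Hleft Hright].
  assert (Hnonneg : forall x, -1 < x -> 0 <= weight b x * phi x ^ 2).
  { intros x Hx. apply Rmult_le_pos; [left; apply weight_pos, Hx|apply pow2_ge_0]. }
  assert (HC : RInt (fun s => weight b s * phi s ^ 2) (-1) t
               + RInt (fun s => weight b s * phi s ^ 2) t 1 = weight b 1).
  { rewrite <- (is_RInt_unique _ _ _ _ Hmass). exact (RInt_Chasles _ _ _ _ Hleft Hright). }
  assert (0 <= RInt (fun s => weight b s * phi s ^ 2) t 1).
  { apply RInt_ge_0; [lra|exact Hright|]. intros x Hx. apply Hnonneg. lra. }
  assert (0 <= mass b phi t).
  { apply RInt_ge_0; [lra|exact Hleft|]. intros x Hx. apply Hnonneg. lra. }
  unfold mass in *. lra.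
Qed.

End Mass.

Section Monotonicity.

Variables (b c alpha M : R) (phi Y : R -> R).
Hypothesis Hb : 1 <= b.
Hypothesis Hq : 0 < potential c alpha 1.
Hypothesis Hode : solves_ode b c alpha phi Y.
Hypothesis Hbd : forall t, -1 <= t <= 1 -> Rabs (phi t) <= M.
Hypothesis Hmass : is_RInt (fun s => weight b s * phi s ^ 2) (-1) 1 (weight b 1).

Notation H := (energy_H b c alpha phi Y).
Notation K := (energy_K b c alpha phi Y).
Notation W := (mass b phi).
Notation N := (weight b 1).

Lemma derive_plus_mass (E : R -> R) (dE lam t : R) : -1 < t < 1 -> is_derive E t dE ->
  is_derive (fun x => E x + lam * W x) t (dE + lam * (weight b t * phi t ^ 2)).
Proof.
  intros Ht HE. apply (is_derive_plus E (fun x => lam * W x)); [exact HE|].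
  apply (is_derive_scal W t lam).
  apply (mass_derive b phi Hmass); [|exact Ht].
  intros x Hx. eexists. exact (proj1 (Hode x Hx)).
Qed.

Lemma flux_term_nonneg (t : R) : -1 < t < 1 ->
  0 <= Y t ^ 2 / ((1 + t) * potential c alpha t ^ 2 * weight b t).
Proof.
  intros Ht. pose proof (weight_pos b t (proj1 Ht)).
  pose proof (potential_pos c alpha Hq t ltac:(lra)).
  apply Rdiv_le_0_compat; [apply pow2_ge_0|].
  apply Rmult_lt_0_compat; [apply Rmult_lt_0_compat; [lra|apply pow_lt]|]; lra.
Qed.

(** Case of nonpositive drift: H + 2W increases on [eta, 1) and H vanishes
    along points near 1, whence H(eta) <= 2 W(1). *)
Lemma energy_H_bound_nonpositive_drift (eta : R) : -1 < eta < 1 ->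
  drift b c alpha eta <= 0 -> H eta <= 2 * N.
Proof.
  intros Heta Hdrift.
  enough (H eta + 2 * W eta <= 2 * N) by (pose proof (mass_bounds b phi Hmass eta ltac:(lra)); lra).
  apply (le_of_monotone_near_one (fun x => H x + 2 * W x)); [lra| |].
  - intros T HT.
    apply (nondecreasing_of_derive (fun x => H x + 2 * W x) (fun t =>
      energy_H_rate b c alpha phi Y t + 2 * (weight b t * phi t ^ 2)) eta T); [| |lra].
    + intros t Ht. apply derive_plus_mass; [lra|]. apply (energy_H_derive b c alpha phi Y Hq Hode). lra.
    + intros t Ht. pose proof (flux_term_nonneg t ltac:(lra)).
      pose proof (drift_antitone b c alpha eta t ltac:(lra) (proj1 Ht)).
      pose proof (weight_pos b t ltac:(lra)). pose proof (pow2_ge_0 (phi t)).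
      assert (0 <= weight b t * ((b + 1) * (1 - t)) * phi t ^ 2)
        by (apply Rmult_le_pos; [apply Rmult_le_pos; [|apply Rmult_le_pos]|]; lra).
      unfold energy_H_rate. nra.
  - intros eps He.
    apply (near_one_mono (fun t => H t <= eps)).
    + intros t Ht HHt. pose proof (mass_bounds b phi Hmass t ltac:(lra)). lra.
    + apply (energy_H_vanishes_near_one b c alpha M phi Y); assumption.
Qed.

(** Case of nonnegative drift: H - 2bW decreases on (-1, eta] and H vanishes
    along points near -1, whence H(eta) <= 2b W(eta). *)
Lemma energy_H_bound_nonnegative_drift (eta : R) : -1 < eta < 1 ->
  0 <= drift b c alpha eta -> H eta <= 2 * b * W eta.
Proof.
  intros Heta Hdrift.
  enough (H eta + - (2 * b) * W eta <= 0) by lra.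
  apply (le_of_monotone_near_minus_one (fun x => H x + - (2 * b) * W x)); [lra| |].
  - intros T HT.
    apply (nonincreasing_of_derive (fun x => H x + - (2 * b) * W x) (fun t =>
      energy_H_rate b c alpha phi Y t + - (2 * b) * (weight b t * phi t ^ 2)) T eta); [| |lra].
    + intros t Ht. apply derive_plus_mass; [lra|]. apply (energy_H_derive b c alpha phi Y Hq Hode). lra.
    + intros t Ht. pose proof (flux_term_nonneg t ltac:(lra)).
      pose proof (drift_antitone b c alpha t eta ltac:(lra) (proj2 Ht)).
      pose proof (weight_pos b t ltac:(lra)). pose proof (pow2_ge_0 (phi t)).
      assert (0 <= weight b t * ((b + 1) * (1 + t)) * phi t ^ 2)
        by (apply Rmult_le_pos; [apply Rmult_le_pos; [|apply Rmult_le_pos]|]; lra).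
      unfold energy_H_rate. nra.
  - intros eps He.
    apply (near_minus_one_mono (fun t => H t <= eps)).
    + intros t Ht HHt. pose proof (mass_bounds b phi Hmass t ltac:(lra)).
      assert (0 <= 2 * b * W t) by (apply Rmult_le_pos; lra). lra.
    + apply (energy_H_vanishes_near_minus_one b c alpha M phi Y); assumption.
Qed.

(** K + 2 W(1) W increases on (-1, 1) and K vanishes along points near 1,
    whence K(eta) <= 2 W(1) (W(1) - W(eta)). *)
Lemma energy_K_bound (eta : R) : -1 < eta < 1 -> K eta <= 2 * N * (N - W eta).
Proof.
  intros Heta. pose proof (weight_pos b 1 ltac:(lra)).
  enough (K eta + 2 * N * W eta <= 2 * N * N) by lra.
  apply (le_of_monotone_near_one (fun x => K x + 2 * N * W x)); [lra| |].
  - intros T HT.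
    apply (nondecreasing_of_derive (fun x => K x + 2 * N * W x) (fun t =>
      energy_K_rate b c alpha phi Y t + 2 * N * (weight b t * phi t ^ 2)) eta T); [| |lra].
    + intros t Ht. apply derive_plus_mass; [lra|]. apply (energy_K_derive b c alpha phi Y Hq Hode). lra.
    + intros t Ht. pose proof (weight_pos b t ltac:(lra)) as Hw.
      pose proof (weight_le b t 1 Hb ltac:(lra)) as HwN.
      assert (0 <= c ^ 2 / 8 * (Y t / potential c alpha t) ^ 2)
        by (apply Rmult_le_pos; [apply Rmult_le_pos; [apply pow2_ge_0|lra]|apply pow2_ge_0]).
      assert (0 <= 2 * weight b t * (b * (1 - t)) + 2 * (N - weight b t))
        by (assert (0 <= weight b t * (b * (1 - t))) by (apply Rmult_le_pos; [|apply Rmult_le_pos]; lra); lra).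
      assert (0 <= weight b t * phi t ^ 2 * (2 * weight b t * (b * (1 - t)) + 2 * (N - weight b t)))
        by (apply Rmult_le_pos; [apply Rmult_le_pos; [lra|apply pow2_ge_0]|lra]).
      unfold energy_K_rate. nra.
  - intros eps He.
    apply (near_one_mono (fun t => K t <= eps)).
    + intros t Ht HKt. pose proof (mass_bounds b phi Hmass t ltac:(lra)).
      assert (2 * N * W t <= 2 * N * N) by (apply Rmult_le_compat_l; lra). lra.
    + apply (energy_K_vanishes_near_one b c alpha M phi Y); assumption.
Qed.

End Monotonicity.

(** On [(b-1)/b, 1] the weight varies by a factor at most 7/4:
    w(1)/w(eta) = exp((b-1) ln(2/(1+eta))) <= exp(1/2) < 7/4. *)
Lemma weight_ratio (b eta : R) : 1 <= b -> (b - 1) / b <= eta <= 1 ->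
  weight b 1 <= 7 / 4 * weight b eta.
Proof.
  intros Hb Heta.
  assert (Heta0 : 0 <= eta) by (assert (0 <= (b - 1) / b) by (apply Rdiv_le_0_compat; lra); lra).
  set (X := (b - 1) * ln (2 / (1 + eta))).
  assert (Hsplit : weight b 1 = weight b eta * exp X).
  { unfold weight, Rpower, X. rewrite <- exp_plus, ln_div by lra. f_equal.
    replace (1 + 1) with 2 by ring. ring. }
  assert (Hln : ln (2 / (1 + eta)) <= (1 - eta) / (1 + eta)).
  { pose proof (exp_ineq1_le (ln (2 / (1 + eta)))) as Hexp.
    rewrite exp_ln in Hexp by (apply Rdiv_lt_0_compat; lra).
    replace ((1 - eta) / (1 + eta)) with (2 / (1 + eta) - 1) by (field; lra). lra. }
  assert (HX : X <= / 2).
  { assert (Hbeta : (b - 1) * (1 - eta) <= eta).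
    { replace ((b - 1) / b) with (1 - 1 / b) in Heta by (field; lra).
      assert (1 - eta <= 1 / b) by lra.
      apply Rle_trans with ((b - 1) * (1 / b)); [apply Rmult_le_compat_l; lra|].
      replace ((b - 1) * (1 / b)) with (1 - 1 / b) by (field; lra). lra. }
    apply Rle_trans with ((b - 1) * ((1 - eta) / (1 + eta))); [apply Rmult_le_compat_l; lra|].
    apply Rmult_le_reg_r with (1 + eta); [lra|].
    replace ((b - 1) * ((1 - eta) / (1 + eta)) * (1 + eta)) with ((b - 1) * (1 - eta))
      by (field; lra). lra. }
  assert (Hexp : exp X <= 7 / 4).
  { assert (exp X <= exp (/ 2))
      by (destruct (Req_dec X (/ 2)) as [->|]; [lra|left; apply exp_increasing; lra]).
    assert (exp (/ 2) * exp (/ 2) = exp 1) by (rewrite <- exp_plus; f_equal; lra).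
    pose proof exp_le_3. pose proof (exp_pos (/ 2)). nra. }
  rewrite Hsplit. pose proof (weight_pos b eta ltac:(lra)). nra.
Qed.

Lemma eliminate_mass (b N W P : R) : 3 / 2 <= b -> 0 < N -> 0 <= P ->
  P <= 2 * b * W -> P <= 7 / 2 * (N - W) -> P <= 4 * (b - 1) * N.
Proof. intros. nra. Qed.

(** The weighted estimate p(eta) phi(eta)^2 <= 4 (b-1) w(1) on [(b-1)/b, 1]:
    at eta = 1 it is trivial (p(1) = 0); otherwise split on the sign of the drift. *)
Lemma stiffness_phi_sq_bound (b c alpha M eta : R) (phi Y : R -> R) :
  3 / 2 <= b -> 0 < potential c alpha 1 -> solves_ode b c alpha phi Y ->
  (forall t, -1 <= t <= 1 -> Rabs (phi t) <= M) ->
  is_RInt (fun s => weight b s * phi s ^ 2) (-1) 1 (weight b 1) ->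
  (b - 1) / b <= eta <= 1 ->
  stiffness b eta * phi eta ^ 2 <= 4 * (b - 1) * weight b 1.
Proof.
  intros Hb Hq Hode Hbd Hmass Heta.
  pose proof (weight_pos b 1 ltac:(lra)) as HN.
  assert (Heta0 : 0 < eta) by (assert (0 < (b - 1) / b) by (apply Rdiv_lt_0_compat; lra); lra).
  destruct (Req_dec eta 1) as [->|Hne].
  { unfold stiffness. replace (1 - 1) with 0 by ring. nra. }
  assert (Heta' : -1 < eta < 1) by lra.
  set (P := stiffness b eta * phi eta ^ 2).
  assert (HP0 : 0 <= P) by (apply Rmult_le_pos; [left; apply stiffness_pos|apply pow2_ge_0]; lra).
  assert (HPH : P <= energy_H b c alpha phi Y eta) by (apply energy_H_ge; assumption).
  destruct (Rle_dec (drift b c alpha eta) 0) as [Hneg|Hpos].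
  - pose proof (energy_H_bound_nonpositive_drift b c alpha M phi Y ltac:(lra) Hq Hode Hbd Hmass
                  eta Heta' Hneg).
    nra.
  - pose proof (energy_H_bound_nonnegative_drift b c alpha M phi Y ltac:(lra) Hq Hode Hbd Hmass
                  eta Heta' ltac:(lra)).
    pose proof (energy_K_bound b c alpha M phi Y ltac:(lra) Hq Hode Hbd Hmass eta Heta') as HK.
    pose proof (mass_bounds b phi Hmass eta ltac:(lra)).
    pose proof (weight_ratio b eta ltac:(lra) Heta).
    pose proof (weight_pos b eta ltac:(lra)).
    assert (HPK : P * weight b eta <= 7 / 2 * (weight b 1 - mass b phi eta) * weight b eta).
    { unfold energy_K in HK. nra. }
    apply (eliminate_mass b (weight b 1) (mass b phi eta) P); try lra.
    apply Rmult_le_reg_r with (weight b eta); lra.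
Qed.

Lemma rpow_pos (x y : R) : 0 < x -> rpow x y = Rpower x y.
Proof. intros Hx. unfold rpow. destruct (Rle_dec x 0); [lra|reflexivity]. Qed.

(** Since 2 beta = 2m + d is an integer, beta > 1 forces beta >= 3/2. *)
Lemma beta_ge_three_halves (m d : nat) : 1 < beta m d -> 3 / 2 <= beta m d.
Proof.
  unfold beta. intros Hb.
  assert (Hint : INR (2 * m + d) = 2 * INR m + INR d)
    by (rewrite plus_INR, mult_INR; simpl; ring).
  assert (Hgt : (2 < 2 * m + d)%nat) by (apply INR_lt; rewrite Hint; simpl; lra).
  assert (H3 : INR 3 <= INR (2 * m + d)) by (apply le_INR; lia).
  rewrite Hint in H3. simpl in H3. lra.
Qed.

Lemma a_md_eq (m d : nat) : 0 < beta m d -> a_md m d = (beta m d - 1) / beta m d.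
Proof. unfold a_md, beta. intros. field. lra. Qed.

Lemma stiffness_rpow (b t : R) : -1 < t -> (1 - t) * rpow (1 + t) b = stiffness b t.
Proof.
  intros Ht. unfold stiffness, weight. rewrite rpow_pos by lra.
  replace b with ((b - 1) + 1) at 1 by ring. rewrite Rpower_plus, Rpower_1 by lra. ring.
Qed.

Lemma bound_rpow (b : R) : rpow 2 (b + 1) * (b - 1) = 4 * (b - 1) * weight b 1.
Proof.
  unfold weight. rewrite rpow_pos by lra. replace (b + 1) with ((b - 1) + INR 2) by (simpl; ring).
  rewrite Rpower_plus, Rpower_pow by lra. replace (1 + 1) with 2 by ring. simpl. ring.
Qed.

Lemma solves_ode_radial (b c alpha : R) (phi : R -> R) :
  (forall eta, -1 < eta < 1 ->
     ex_derive phi eta /\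
     is_derive (fun x => (1 - x) * rpow (1 + x) b * Derive phi x) eta
       (- ((alpha - c ^ 2 * (1 + eta) / 8) * rpow (1 + eta) (b - 1) * phi eta))) ->
  solves_ode b c alpha phi (fun x => (1 - x) * rpow (1 + x) b * Derive phi x).
Proof.
  intros Hode t Ht. destruct (Hode t Ht) as [Hex HY]. split.
  - rewrite stiffness_rpow by lra.
    replace (stiffness b t * Derive phi t / stiffness b t) with (Derive phi t)
      by (pose proof (stiffness_pos b t Ht); field; lra).
    now apply Derive_correct.
  - unfold potential, weight. rewrite <- rpow_pos by lra. exact HY.
Qed.

Lemma mass_normalization (b : R) (phi : R -> R) :
  is_RInt (fun t => rpow (1 + t) (b - 1) * Rabs (phi t) ^ 2) (-1) 1 (rpow 2 (b - 1)) ->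
  is_RInt (fun s => weight b s * phi s ^ 2) (-1) 1 (weight b 1).
Proof.
  intros HI. unfold weight. replace (1 + 1) with 2 by ring. rewrite <- rpow_pos by lra.
  apply (is_RInt_ext (fun t => rpow (1 + t) (b - 1) * Rabs (phi t) ^ 2)); [|exact HI].
  intros t Ht. rewrite Rmin_left, Rmax_right in Ht by lra.
  rewrite rpow_pos, pow2_abs by lra. reflexivity.
Qed.

(** Taking square roots (sqrt vanishes on negative reals, so no sign condition on p). *)
Lemma sqrt_mult_abs_le (p x B : R) : p * x ^ 2 <= B -> sqrt p * Rabs x <= sqrt B.
Proof.
  intros Hle. destruct (Rle_dec 0 p) as [Hp|Hp].
  - rewrite <- (sqrt_pow2 (Rabs x)) by apply Rabs_pos.
    rewrite <- sqrt_mult, pow2_abs by (auto; apply pow2_ge_0).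
    now apply sqrt_le_1_alt.
  - rewrite sqrt_neg_0 by lra. rewrite Rmult_0_l. apply sqrt_pos.
Qed.

Theorem lemma3p7 (c : R) (d m : nat) (alpha : R) (phi : R -> R) :
  0 < c ->
  (2 <= d)%nat ->
  1 < beta m d ->
  (* phi is bounded on [-1,1] *)
  (exists M : R, forall t, -1 <= t <= 1 -> Rabs (phi t) <= M) ->
  (* phi solves the ODE on (-1,1) *)
  (forall eta, -1 < eta < 1 ->
     ex_derive phi eta /\
     is_derive (fun x => (1 - x) * rpow (1 + x) (beta m d) * Derive phi x) eta
       (- ((alpha - c ^ 2 * (1 + eta) / 8)
            * rpow (1 + eta) (beta m d - 1) * phi eta))) ->
  (* normalization *)
  is_RInt (fun t => rpow (1 + t) (beta m d - 1) * (Rabs (phi t)) ^ 2) (-1) 1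
    (rpow 2 (beta m d - 1)) ->
  alpha > c ^ 2 / 4 ->
  forall eta, a_md m d <= eta <= 1 ->
    sqrt ((1 - eta) * rpow (1 + eta) (beta m d)) * Rabs (phi eta)
      <= sqrt (rpow 2 (beta m d + 1) * (beta m d - 1)).
Proof.
  intros _ _ Hb1 [M Hbd] Hode Hnorm Halpha eta Heta.
  pose proof (beta_ge_three_halves m d Hb1) as Hb.
  rewrite a_md_eq in Heta by lra.
  assert (Heta0 : 0 < eta) by (assert (0 < (beta m d - 1) / beta m d) by (apply Rdiv_lt_0_compat; lra); lra).
  rewrite stiffness_rpow, bound_rpow by lra.
  apply sqrt_mult_abs_le.
  apply (stiffness_phi_sq_bound (beta m d) c alpha M eta phi
           (fun x => (1 - x) * rpow (1 + x) (beta m d) * Derive phi x)); try assumption.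
  - unfold potential. lra.
  - now apply solves_ode_radial.
  - now apply mass_normalization.
Qed.
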